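(* Let $K$ be a field of characteristic $0$, let $L=\mathcal{L}(x,y)$ be the free Lie algebra over $K$ freely generated by $x,y$, let $\delta$ be the derivation of $L$ with $\delta(x)=0$, $\delta(y)=x$, and $L^\delta=\ker\delta$. If $f\in L^\delta$ is a nonzero element of degree at most $5$, then $f$ belongs to the Lie subalgebra of $L$ generated by $x$ and $[y,x]$. *)

From mathcomp Require Import all_boot all_order all_algebra.
Set Implicit Arguments. Unset Strict Implicit. Unset Printing Implicit Defensive.
Import GRing.Theory.
Local Open Scope ring_scope.

(* Words in the two letters: false = x, true = y. *)
Definition word := seq bool.

(* Noncommutative formal power series K<<x,y>> : coefficient functions on words.
   The free associative algebra K<x,y> (the universal enveloping algebra of the
   free Lie algebra L(x,y)) sits inside, and L(x,y) is realized as the Lie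
   subalgebra generated by x and y (Lie polynomials). *)
Definition series (K : fieldType) := word -> K.

Section Series.
Variable K : fieldType.

Definition szero : series K := fun _ => 0.
Definition sadd (f g : series K) : series K := fun w => f w + g w.
Definition sscale (c : K) (f : series K) : series K := fun w => c * f w.

Definition smul (f g : series K) : series K :=
  fun w => \sum_(i < (size w).+1) f (take i w) * g (drop i w).

Definition sbracket (f g : series K) : series K :=
  fun w => smul f g w - smul g f w.

Definition sX : series K := fun w => (w == [:: false])%:R.
Definition sY : series K := fun w => (w == [:: true])%:R.

Inductive lie_span (S : series K -> Prop) : series K -> Prop :=
| ls_gen f : S f -> lie_span S f
| ls_zero : lie_span S szero
| ls_add f g : lie_span S f -> lie_span S g -> lie_span S (sadd f g)
| ls_scale c f : lie_span S f -> lie_span S (sscale c f)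
| ls_bracket f g : lie_span S f -> lie_span S g -> lie_span S (sbracket f g).

Definition free_lie (f : series K) : Prop :=
  lie_span (fun g => g = sX \/ g = sY) f.

(* The derivation delta with delta(x) = 0, delta(y) = x, extended as a
   derivation of the associative algebra: on a word it sums over the
   occurrences of y, replacing each by x.  Coefficientwise: *)
Definition sdelta (f : series K) : series K :=
  fun w => \sum_(i < size w | nth true w i == false) f (set_nth false w i true).

Definition deg_le (d : nat) (f : series K) : Prop :=
  forall w : word, (d < size w)%N -> f w = 0.

End Series.

(* Up to degree 5, L(x,y) is spanned by fourteen Lie monomials in x, y and
   u = [y,x]: the bracket of two of them agrees up to degree 5 with an integer
   combination of them, so every element f of L of degree at most 5 is a
   K-combination of the fourteen.  Six of them, x, u, [u,x], [[u,x],x],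
   [[[u,x],x],x] and [u,[u,x]], are brackets of x and u.  For each of the eight
   others there is a word on which delta of that monomial has a nonzero integer
   coefficient while delta of every other monomial vanishes; in characteristic 0,
   delta f = 0 therefore kills the corresponding eight coordinates of f.  The
   integer facts are checked by computation on the 63 words of length at most 5. *)

From HB Require Import structures.
From mathcomp Require Import all_boot all_order all_algebra.
From mathcomp Require Import zify.
From Stdlib Require Import FunctionalExtensionality.
Set Implicit Arguments. Unset Strict Implicit. Unset Printing Implicit Defensive.
Import GRing.Theory.
Local Open Scope ring_scope.

Definition iser := word -> int.

(* A [foldr] rather than a [\sum], which is locked and would block [vm_compute]. *)
Definition isum (T : Type) (s : seq T) (F : T -> int) : int :=
  foldr (fun i acc => F i + acc) 0 s.

Definition imul (f g : iser) : iser :=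
  fun w => isum (index_iota 0 (size w).+1) (fun i => f (take i w) * g (drop i w)).
Definition ibracket (f g : iser) : iser := fun w => imul f g w - imul g f w.
Definition idelta (f : iser) : iser := fun w =>
  isum (index_iota 0 (size w))
       (fun i => if nth true w i then 0 else f (set_nth false w i true)).
Definition ix : iser := fun w => (w == [:: false])%:Z.
Definition iy : iser := fun w => (w == [:: true])%:Z.

Lemma isumE (T : Type) (s : seq T) (F : T -> int) : isum s F = \sum_(i <- s) F i.
Proof. by elim: s => [|i s IHs]; rewrite ?big_nil ?big_cons //= IHs. Qed.

Definition agree_upto (R : Type) (n : nat) (f g : word -> R) : Prop :=
  forall w, (size w <= n)%N -> f w = g w.

Lemma imul_agree n f f' g g' :
  agree_upto n f f' -> agree_upto n g g' -> agree_upto n (imul f g) (imul f' g').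
Proof.
move=> ff' gg' w sw; rewrite /imul !isumE; apply: eq_bigr => i _.
rewrite ff' ?gg' //; last by rewrite size_take_min (leq_trans (geq_minr _ _)).
by rewrite size_drop (leq_trans (leq_subr _ _)).
Qed.

Lemma ibracket_agree n f f' g g' :
  agree_upto n f f' -> agree_upto n g g' -> agree_upto n (ibracket f g) (ibracket f' g').
Proof. by move=> ff' gg' w sw; rewrite /ibracket !(imul_agree ff' gg', imul_agree gg' ff'). Qed.

Lemma idelta_agree n f g : agree_upto n f g -> agree_upto n (idelta f) (idelta g).
Proof.
move=> fg w sw; rewrite /idelta !isumE; apply: eq_big_seq => i.
rewrite mem_index_iota => /andP[_ iw].
by case: ifP => // _; rewrite fg // size_set_nth (maxn_idPr iw).
Qed.

Inductive trie := Leaf | Node of int & trie & trie.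

Fixpoint tget (t : trie) (w : word) : int :=
  match t, w with
  | Leaf, _ => 0
  | Node v _ _, [::] => v
  | Node _ l r, b :: w' => tget (if b then r else l) w'
  end.

Fixpoint tbuild (n : nat) (f : iser) : trie :=
  if n is n'.+1 then
    Node (f [::]) (tbuild n' (fun w => f (false :: w))) (tbuild n' (fun w => f (true :: w)))
  else Node (f [::]) Leaf Leaf.

Lemma tget_tbuild n f : agree_upto n (tget (tbuild n f)) f.
Proof. by elim: n f => [|n IHn] f [|[] w] //= sw; rewrite IHn. Qed.

Inductive lie_term := LX | LY | LBr of lie_term & lie_term.

Fixpoint lie_term_eqb (a b : lie_term) : bool :=
  match a, b with
  | LX, LX | LY, LY => true
  | LBr a1 a2, LBr b1 b2 => lie_term_eqb a1 b1 && lie_term_eqb a2 b2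
  | _, _ => false
  end.

Lemma lie_term_eqP : Equality.axiom lie_term_eqb.
Proof.
elim=> [|| a1 IH1 a2 IH2] [|| b1 b2] /=; try by constructor.
by apply: (iffP andP) => [[/IH1 -> /IH2 ->] | [<- <-]]; split; [apply/IH1 | apply/IH2].
Qed.

HB.instance Definition _ := hasDecEq.Build lie_term lie_term_eqP.

Definition Lu : lie_term := LBr LY LX.

Fixpoint ldeg (t : lie_term) : nat :=
  if t is LBr a b then (ldeg a + ldeg b)%N else 1%N.

Fixpoint ieval (t : lie_term) : iser :=
  match t with LX => ix | LY => iy | LBr a b => ibracket (ieval a) (ieval b) end.

(* The [let]s make [vm_compute] tabulate each subterm only once. *)
Fixpoint teval (n : nat) (t : lie_term) : trie :=
  match t with
  | LX => tbuild n ix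
  | LY => tbuild n iy
  | LBr a b => let ta := teval n a in let tb := teval n b in
               tbuild n (ibracket (tget ta) (tget tb))
  end.

Lemma teval_agree n t : agree_upto n (tget (teval n t)) (ieval t).
Proof.
elim: t => [||a IHa b IHb] w sw /=; rewrite tget_tbuild //.
exact: (ibracket_agree IHa IHb).
Qed.

Fixpoint xu_term (t : lie_term) : bool :=
  match t with
  | LX => true
  | LY => false
  | LBr a b => (t == Lu) || xu_term a && xu_term b
  end.

Fixpoint words (n : nat) : seq word :=
  if n is n'.+1 then [seq b :: w | b <- [:: false; true], w <- words n'] else [:: [::]].

Definition words_upto (n : nat) : seq word := flatten [seq words k | k <- iota 0 n.+1].

Lemma mem_words k w : (w \in words k) = (size w == k).
Proof.
elim: k w => [|k IHk] w; first by case: w.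
apply/allpairsP/idP => [[[b v] /= [_ vk ->]] | ]; first by rewrite /= eqSS -IHk.
by case: w => [|b w] //= wk; exists (b, w); rewrite /= IHk; case: b.
Qed.

Lemma mem_words_upto n w : (w \in words_upto n) = (size w <= n)%N.
Proof.
apply/flatten_mapP/idP => [[k] | sw]; first by rewrite mem_iota mem_words => kn /eqP ->.
by exists (size w); rewrite ?mem_words // mem_iota.
Qed.

Section Series.
Variable K : fieldType.
Implicit Types (f g h : series K) (c d : lie_term -> K).

Definition toK (f : iser) : series K := fun w => (f w)%:~R.

Definition leval (t : lie_term) : series K := toK (ieval t).

Lemma smul_toK (f g : iser) : smul (toK f) (toK g) = toK (imul f g).
Proof.
apply: functional_extensionality => w.
rewrite /smul /toK /imul isumE rmorph_sum big_mkord.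
by apply: eq_bigr => i _; rewrite rmorphM.
Qed.

Lemma sdelta_toK (f : iser) : sdelta (toK f) = toK (idelta f).
Proof.
apply: functional_extensionality => w.
rewrite /sdelta /toK /idelta isumE rmorph_sum big_mkord big_mkcond.
by apply: eq_bigr => i _; case: (nth true w i).
Qed.

Lemma leval_LX : leval LX = sX K.
Proof. exact: functional_extensionality. Qed.

Lemma leval_LY : leval LY = sY K.
Proof. exact: functional_extensionality. Qed.

Lemma leval_LBr a b : leval (LBr a b) = sbracket (leval a) (leval b).
Proof.
apply: functional_extensionality => w.
by rewrite /sbracket !smul_toK /leval /toK /= /ibracket intrB.
Qed.

Lemma smul_deg_le m1 m2 f g : deg_le m1 f -> deg_le m2 g -> deg_le (m1 + m2) (smul f g).
Proof.
move=> f0 g0 w sw; rewrite /smul big1 // => i _; have := ltn_ord i.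
case: (leqP i m1) => im1 iw.
  by rewrite g0 ?mulr0 // size_drop; lia.
by rewrite f0 ?mul0r // size_take_min; lia.
Qed.

Lemma sbracket_deg_le m1 m2 f g :
  deg_le m1 f -> deg_le m2 g -> deg_le (m1 + m2) (sbracket f g).
Proof.
move=> f0 g0 w sw; rewrite /sbracket (smul_deg_le f0 g0) // (smul_deg_le g0 f0) ?subr0 //.
by rewrite addnC.
Qed.

Lemma leval_deg_le t : deg_le (ldeg t) (leval t).
Proof.
elim: t => [||a IHa b IHb] /=; last by rewrite leval_LBr; apply: sbracket_deg_le.
  by move=> w sw; rewrite /leval /toK /= /ix; case: eqP sw => // ->.
by move=> w sw; rewrite /leval /toK /= /iy; case: eqP sw => // ->.
Qed.

Lemma deg_le_agree_eq n f g : deg_le n f -> deg_le n g -> agree_upto n f g -> f = g.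
Proof.
move=> f0 g0 fg; apply: functional_extensionality => w.
by case: (leqP (size w) n) => sw; [exact: fg | rewrite f0 ?g0].
Qed.

Lemma smul_agree n f f' g g' :
  agree_upto n f f' -> agree_upto n g g' -> agree_upto n (smul f g) (smul f' g').
Proof.
move=> ff' gg' w sw; apply: eq_bigr => i _.
rewrite ff' ?gg' //; last by rewrite size_take_min (leq_trans (geq_minr _ _)).
by rewrite size_drop (leq_trans (leq_subr _ _)).
Qed.

Lemma sbracket_agree n f f' g g' :
  agree_upto n f f' -> agree_upto n g g' -> agree_upto n (sbracket f g) (sbracket f' g').
Proof. by move=> ff' gg' w sw; rewrite /sbracket !(smul_agree ff' gg', smul_agree gg' ff'). Qed.

Lemma sdelta_agree n f g : agree_upto n f g -> agree_upto n (sdelta f) (sdelta g).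
Proof.
move=> fg w sw; apply: eq_bigr => i _.
by rewrite fg // size_set_nth (maxn_idPr (ltn_ord i)).
Qed.

Lemma smul_sum (I J : Type) (r : seq I) (s : seq J) (a : I -> K) (b : J -> K)
    (F : I -> series K) (G : J -> series K) w :
  smul (fun v => \sum_(i <- r) a i * F i v) (fun v => \sum_(j <- s) b j * G j v) w =
  \sum_(i <- r) \sum_(j <- s) a i * b j * smul (F i) (G j) w.
Proof.
rewrite /smul.
under eq_bigr => k _ do rewrite big_distrlr.
rewrite exchange_big; apply: eq_bigr => i _; rewrite exchange_big.
by apply: eq_bigr => j _; rewrite mulr_sumr; apply: eq_bigr => k _; rewrite mulrACA.
Qed.

Definition lin_comb (B : seq lie_term) c : series K :=
  fun w => \sum_(t <- B) c t * leval t w.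

Lemma sbracket_lin_comb B c d w :
  sbracket (lin_comb B c) (lin_comb B d) w =
  \sum_(a <- B) \sum_(b <- B) c a * d b * leval (LBr a b) w.
Proof.
rewrite /sbracket !smul_sum [X in _ - X]exchange_big -sumrB.
apply: eq_bigr => a _; rewrite -sumrB; apply: eq_bigr => b _.
by rewrite leval_LBr /sbracket mulrBr [d b * c a]mulrC.
Qed.

Lemma sdelta_lin_comb B c w :
  sdelta (lin_comb B c) w = \sum_(t <- B) c t * sdelta (leval t) w.
Proof.
by rewrite /sdelta /lin_comb exchange_big; apply: eq_bigr => t _; rewrite mulr_sumr.
Qed.

Lemma lin_comb_deg_le n B c : (forall t, t \in B -> ldeg t <= n)%N -> deg_le n (lin_comb B c).
Proof.
move=> Bn w sw; rewrite /lin_comb big1_seq // => t /andP[_ tB].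
by rewrite leval_deg_le ?mulr0 // (leq_ltn_trans (Bn t tB)).
Qed.

End Series.

Section TruncatedSpan.
Variables (K : fieldType) (n : nat) (B : seq lie_term).

Definition trunc_span (g : series K) : Prop := exists c, agree_upto n g (lin_comb B c).

Lemma trunc_span_agree g h : agree_upto n g h -> trunc_span h -> trunc_span g.
Proof. by move=> gh [c hc]; exists c => w sw; rewrite gh ?hc. Qed.

Lemma trunc_span0 : trunc_span (szero K).
Proof. by exists (fun=> 0) => w _; rewrite /szero /lin_comb big1 // => t _; rewrite mul0r. Qed.

Lemma trunc_spanD g h : trunc_span g -> trunc_span h -> trunc_span (sadd g h).
Proof.
move=> [c gc] [d hd]; exists (fun t => c t + d t) => w sw.
by rewrite /sadd gc ?hd // /lin_comb -big_split; apply: eq_bigr => t _; rewrite mulrDl.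
Qed.

Lemma trunc_spanZ a g : trunc_span g -> trunc_span (sscale a g).
Proof.
move=> [c gc]; exists (fun t => a * c t) => w sw.
by rewrite /sscale gc // /lin_comb mulr_sumr; apply: eq_bigr => t _; rewrite mulrA.
Qed.

Lemma trunc_span_sum (I : eqType) (r : seq I) (a : I -> K) (F : I -> series K) :
  (forall i, i \in r -> trunc_span (F i)) -> trunc_span (fun w => \sum_(i <- r) a i * F i w).
Proof.
elim: r => [|i r IHr] Fr.
  by apply: trunc_span_agree trunc_span0 => w _; rewrite big_nil.
apply: (@trunc_span_agree _ (sadd (sscale (a i) (F i)) (fun w => \sum_(j <- r) a j * F j w))).
  by move=> w _; rewrite big_cons.
apply: trunc_spanD; first by apply/trunc_spanZ/Fr; rewrite mem_head.
by apply: IHr => j jr; apply: Fr; rewrite in_cons jr orbT.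
Qed.

Lemma trunc_span_leval t : uniq B -> t \in B -> trunc_span (leval K t).
Proof.
move=> uB tB; exists (fun s => (s == t)%:R) => w _.
rewrite /lin_comb (bigD1_seq t) //= eqxx mul1r big1 ?addr0 // => s /negbTE ->.
by rewrite mul0r.
Qed.

Hypothesis bracket_closed :
  forall a b, a \in B -> b \in B -> trunc_span (leval K (LBr a b)).

Lemma trunc_span_bracket g h : trunc_span g -> trunc_span h -> trunc_span (sbracket g h).
Proof.
move=> [c gc] [d hd].
apply: (trunc_span_agree (sbracket_agree gc hd)).
apply: (@trunc_span_agree _
  (fun w => \sum_(a <- B) c a * \sum_(b <- B) d b * leval K (LBr a b) w)).
  move=> w _; rewrite sbracket_lin_comb; apply: eq_bigr => a _.
  by rewrite mulr_sumr; apply: eq_bigr => b _; rewrite mulrA.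
apply: trunc_span_sum => a aB; apply: trunc_span_sum => b bB.
exact: bracket_closed.
Qed.

Lemma free_lie_trunc_span f : uniq B -> LX \in B -> LY \in B -> free_lie f -> trunc_span f.
Proof.
move=> uB xB yB; elim=> {f} [f [->|->] | | f g _ Sf _ Sg | a f _ Sf | f g _ Sf _ Sg].
- by rewrite -leval_LX; apply: trunc_span_leval.
- by rewrite -leval_LY; apply: trunc_span_leval.
- exact: trunc_span0.
- exact: trunc_spanD Sf Sg.
- exact: trunc_spanZ Sf.
- exact: trunc_span_bracket Sf Sg.
Qed.

Lemma lin_comb_coef_eq0 c f t w :
    uniq B -> t \in B -> (size w <= n)%N ->
    agree_upto n f (lin_comb B c) -> sdelta f = szero K ->
    (forall s, s \in B -> s != t -> idelta (ieval s) w = 0) ->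
    (idelta (ieval t) w)%:~R != 0 :> K ->
  c t = 0.
Proof.
move=> uB tB sw fc df0 ds0 dt0.
have := congr1 (fun h => h w) df0; rewrite /szero (sdelta_agree fc) // sdelta_lin_comb.
rewrite (bigD1_seq t) //= big1_seq => [|s /andP[st sB]]; last first.
  by rewrite /leval sdelta_toK /toK ds0 ?mulr0.
by rewrite addr0 /leval sdelta_toK => /eqP; rewrite mulf_eq0 (negbTE dt0) orbF => /eqP.
Qed.

End TruncatedSpan.

Lemma lie_span_lin_comb (K : fieldType) (S : series K -> Prop) B c :
  (forall t, t \in B -> c t != 0 -> lie_span S (leval K t)) -> lie_span S (lin_comb B c).
Proof.
elim: B => [|t B IHB] BS.
  have -> : lin_comb [::] c = szero K.
    by apply: functional_extensionality => w; rewrite /lin_comb big_nil.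
  exact: ls_zero.
have -> : lin_comb (t :: B) c = sadd (sscale (c t) (leval K t)) (lin_comb B c).
  by apply: functional_extensionality => w; rewrite /lin_comb big_cons.
apply: ls_add; last by apply: IHB => s sB; apply: BS; rewrite in_cons sB orbT.
have [-> | ct0] := eqVneq (c t) 0.
  have -> : sscale 0 (leval K t) = szero K.
    by apply: functional_extensionality => w; rewrite /sscale mul0r.
  exact: ls_zero.
by apply/ls_scale/BS; rewrite ?mem_head.
Qed.

Lemma xu_term_lie_span (K : fieldType) t : xu_term t ->
  lie_span (fun g => g = sX K \/ g = sbracket (sY K) (sX K)) (leval K t).
Proof.
elim: t => [||a IHa b IHb] //=; first by move=> _; apply: ls_gen; left; rewrite leval_LX.
case/orP => [/eqP[-> ->] | /andP[xa xb]].
  by apply: ls_gen; right; rewrite leval_LBr leval_LX leval_LY.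
by rewrite leval_LBr; apply: ls_bracket; [apply: IHa | apply: IHb].
Qed.

Lemma intr_pchar0_neq0 (R : idomainType) (z : int) :
  [pchar R] =i pred0 -> z != 0 -> z%:~R != 0 :> R.
Proof.
move=> /pcharf0P R0; case: z => m; rewrite ?NegzE ?intrN -pmulrn ?oppr_eq0 R0 //.
Qed.

Section Certificates.
Variables (n : nat) (B : seq lie_term) (ev : lie_term -> iser).

Definition is_pivot (t : lie_term) (w : word) : bool :=
  (ev t w ^+ 2 == 1) && all (fun s => (s == t) || (ev s w == 0)) B.

Definition pivot (t : lie_term) : word :=
  nth [::] (words_upto n) (find (is_pivot t) (words_upto n)).

(* [pv t] only serves to compute the coordinate of [t], which is then checked:
   any [pv] is sound, and a pivot word makes the coordinate exact. *)
Definition int_spanb (pv : lie_term -> word) (g : iser) : bool :=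
  let c := [seq (ev t, g (pv t) * ev t (pv t)) | t <- B] in
  all (fun w => g w == isum c (fun p => p.2 * p.1 w)) (words_upto n).

Definition bracket_closedb : bool :=
  let P := [seq pivot t | t <- B] in
  let pv t := nth [::] P (index t B) in
  all (fun a => all (fun b => int_spanb pv (ibracket (ev a) (ev b))) B) B.

Definition delta_separatesb (t : lie_term) (w : word) : bool :=
  (idelta (ev t) w != 0) && all (fun s => (s == t) || (idelta (ev s) w == 0)) B.

Definition kernel_certb : bool :=
  all (fun t => xu_term t || has (delta_separatesb t) (words_upto n)) B.

Hypothesis ev_agree : forall t, t \in B -> agree_upto n (ev t) (ieval t).

Lemma int_spanbP (K : fieldType) pv g : int_spanb pv g -> trunc_span n B (toK K g).
Proof.
move=> /allP gB; exists (fun t => (g (pv t) * ev t (pv t))%:~R) => w sw.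
rewrite /toK /lin_comb (eqP (gB w _)) ?mem_words_upto // isumE big_map rmorph_sum.
by apply: eq_big_seq => t tB; rewrite rmorphM /= /leval /toK (ev_agree tB sw).
Qed.

Lemma bracket_closedP (K : fieldType) : bracket_closedb ->
  forall a b, a \in B -> b \in B -> trunc_span n B (leval K (LBr a b)).
Proof.
rewrite /bracket_closedb /= => /allP closedB a b aB bB.
have /allP/(_ b bB)/(int_spanbP K) abB := closedB a aB.
apply: trunc_span_agree abB => w sw.
by rewrite /leval /toK /= (ibracket_agree (ev_agree aB) (ev_agree bB)).
Qed.

Lemma kernel_certP : kernel_certb -> forall t, t \in B ->
  xu_term t \/
  exists2 w, (size w <= n)%N &
    idelta (ieval t) w != 0 /\ forall s, s \in B -> s != t -> idelta (ieval s) w = 0.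
Proof.
move=> /allP cert t tB; case/orP: (cert t tB) => [|/hasP[w]]; first by left.
rewrite mem_words_upto => sw /andP[dt0 /allP ds0]; right; exists w => //.
rewrite -(idelta_agree (ev_agree tB)) //; split=> // s sB st.
by rewrite -(idelta_agree (ev_agree sB)) //; move: (ds0 s sB); rewrite (negbTE st) => /eqP.
Qed.

End Certificates.

Definition Lux : lie_term := LBr Lu LX.
Definition Luy : lie_term := LBr Lu LY.
Definition Luxx : lie_term := LBr Lux LX.
Definition Luyy : lie_term := LBr Luy LY.

(* The homogeneous components of L of degrees 1, ..., 5 have dimensions
   2, 1, 2, 3, 6.  In degree 5, [[[u,y],y],x] is used rather than [[[u,x],y],y]
   so that every element has a pivot word. *)
Definition basis5 : seq lie_term :=
  [:: LX; LY; Lu; Lux; Luy; Luxx; LBr Lux LY; Luyy;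
      LBr Luxx LX; LBr Lu Lux; LBr Luxx LY; LBr Luyy LX; LBr Lu Luy; LBr Luyy LY].

Definition basis5_tries : seq trie := [seq teval 5 t | t <- basis5].

Definition ev5 (t : lie_term) : iser := tget (nth Leaf basis5_tries (index t basis5)).

Lemma ev5_agree t : t \in basis5 -> agree_upto 5 (ev5 t) (ieval t).
Proof.
move=> tB; rewrite /ev5 /basis5_tries (nth_map LX) ?index_mem // nth_index //.
exact: teval_agree.
Qed.

Lemma basis5_uniq : uniq basis5.
Proof. by []. Qed.

Lemma basis5_ldeg t : t \in basis5 -> (ldeg t <= 5)%N.
Proof. by move: t; apply/allP. Qed.

Lemma basis5_bracket_closed : bracket_closedb 5 basis5 ev5.
Proof. by vm_compute. Qed.

Lemma basis5_kernel_cert : kernel_certb 5 basis5 ev5.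
Proof. by vm_compute. Qed.

Unset Implicit Arguments.
Theorem proposition5p3 (K : fieldType) (charK0 : [pchar K] =i pred0)
  (f : series K) :
  free_lie f ->
  sdelta f = szero K ->
  f <> szero K ->
  deg_le 5 f ->
  lie_span (fun g => g = sX K \/ g = sbracket (sY K) (sX K)) f.
Proof.
move=> Lf df0 _ degf.
have closed5 := bracket_closedP ev5_agree K basis5_bracket_closed.
have [c fc] := free_lie_trunc_span closed5 basis5_uniq isT isT Lf.
have -> : f = lin_comb basis5 c.
  exact: deg_le_agree_eq degf (lin_comb_deg_le _ basis5_ldeg) fc.
apply: lie_span_lin_comb => t tB.
have [xu | [w sw [dt0 ds0]]] := kernel_certP ev5_agree basis5_kernel_cert tB.
  by move=> _; apply: xu_term_lie_span.
have dt0K := intr_pchar0_neq0 charK0 dt0.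
by rewrite (lin_comb_coef_eq0 basis5_uniq tB sw fc df0 ds0 dt0K) eqxx.
Qed.
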